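(* Let $\ell:K(H\times\mathrm{Id})\to HM$ be an abstract GSOS rule with $\ell$-interpretation $b:KC\to C$. Then every sandwiched $\ell$-equation $e:X\to MHMX$ has a unique solution in $C$, i.e. there is a unique morphism $e^\dagger:X\to C$ such that $$e^\dagger = b^\sharp\cdot Mc^{-1}\cdot MHb^\sharp\cdot MHMe^\dagger\cdot e.$$
   Context: Let $\mathcal A$ be a category with binary products and coproducts, let $H:\mathcal A\to\mathcal A$ be a functor with a terminal coalgebra $c:C\to HC$ (so $c$ is an isomorphism by Lambek's lemma), and let $K:\mathcal A\to\mathcal A$ be a functor such that every object $X$ has a free $K$-algebra $\varphi_X:KMX\to MX$ with universal morphism $\eta_X:X\to MX$. Then $(M,\eta,\mu)$ is the free monad on $K$, where $\mu_X:MMX\to MX$ is the unique $K$-algebra homomorphism $(MMX,\varphi_{MX})\to(MX,\varphi_X)$ with $\mu_X\cdot\eta_{MX}=\mathrm{id}_{MX}$, and $\kappa=\varphi\cdot K\eta:K\to M$. For a $K$-algebra $a:KA\to A$ let $a^\sharp:MA\to A$ be the unique $K$-algebra homomorphism with $a^\sharp\cdot\eta_A=\mathrm{id}_A$; it is an Eilenberg–Moore algebra for $M$ and $a=a^\sharp\cdot\kappa_A$. An abstract GSOS rule is a natural transformation $\ell:K(H\times\mathrm{Id})\to HM$; its $\ell$-interpretation is the unique morphism $b:KC\to C$ with $c\cdot b=Hb^\sharp\cdot\ell_C\cdot K\langle c,\mathrm{id}_C\rangle$ (it exists and is unique). A sandwiched $\ell$-equation is any morphism $e:X\to MHMX$.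 *)

(* Universal properties are presented
   algebraically: the mediating morphisms are given as operations together
   with their defining equations and uniqueness laws (equivalent, under
   choice, to "there exists a unique ..."). *)
Set Implicit Arguments.
Unset Strict Implicit.

Record Category := {
  Obj :> Type;
  Hom : Obj -> Obj -> Type;
  idm : forall A, Hom A A;
  comp : forall A B C, Hom B C -> Hom A B -> Hom A C;
  comp_id_l : forall A B (f : Hom A B), comp (idm B) f = f;
  comp_id_r : forall A B (f : Hom A B), comp f (idm A) = f;
  comp_assoc : forall A B C D (h : Hom C D) (g : Hom B C) (f : Hom A B),
      comp h (comp g f) = comp (comp h g) f
}.

Arguments Hom : clear implicits.
Arguments idm {c} A.
Arguments comp {c A B C} _ _.
Infix "∘" := comp (at level 40, left associativity).

Record Functor (Cat : Category) := {
  fobj :> Obj Cat -> Obj Cat;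
  fmap : forall A B, Hom Cat A B -> Hom Cat (fobj A) (fobj B);
  fmap_id : forall A, fmap (idm A) = idm (fobj A);
  fmap_comp : forall A B C (g : Hom Cat B C) (f : Hom Cat A B),
      fmap (g ∘ f) = fmap g ∘ fmap f
}.
Arguments fmap {Cat} f0 {A B} _.

Record Products (Cat : Category) := {
  prodo : Obj Cat -> Obj Cat -> Obj Cat;
  pi1 : forall A B, Hom Cat (prodo A B) A;
  pi2 : forall A B, Hom Cat (prodo A B) B;
  pairing : forall X A B, Hom Cat X A -> Hom Cat X B -> Hom Cat X (prodo A B);
  pi1_pairing : forall X A B (f : Hom Cat X A) (g : Hom Cat X B),
      pi1 A B ∘ pairing f g = f;
  pi2_pairing : forall X A B (f : Hom Cat X A) (g : Hom Cat X B),
      pi2 A B ∘ pairing f g = g;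
  pairing_unique : forall X A B (f : Hom Cat X A) (g : Hom Cat X B)
      (h : Hom Cat X (prodo A B)),
      pi1 A B ∘ h = f -> pi2 A B ∘ h = g -> h = pairing f g
}.
Arguments prodo {Cat} p _ _.
Arguments pi1 {Cat} p {A B}.
Arguments pi2 {Cat} p {A B}.
Arguments pairing {Cat} p {X A B} _ _.

Record Coproducts (Cat : Category) := {
  coprodo : Obj Cat -> Obj Cat -> Obj Cat;
  inl_ : forall A B, Hom Cat A (coprodo A B);
  inr_ : forall A B, Hom Cat B (coprodo A B);
  copairing : forall X A B, Hom Cat A X -> Hom Cat B X -> Hom Cat (coprodo A B) X;
  copairing_inl : forall X A B (f : Hom Cat A X) (g : Hom Cat B X),
      copairing f g ∘ inl_ A B = f;
  copairing_inr : forall X A B (f : Hom Cat A X) (g : Hom Cat B X),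
      copairing f g ∘ inr_ A B = g;
  copairing_unique : forall X A B (f : Hom Cat A X) (g : Hom Cat B X)
      (h : Hom Cat (coprodo A B) X),
      h ∘ inl_ A B = f -> h ∘ inr_ A B = g -> h = copairing f g
}.

Record TerminalCoalgebra (Cat : Category) (H : Functor Cat) := {
  tc_carrier : Obj Cat;
  tc_str : Hom Cat tc_carrier (H tc_carrier);
  tc_unfold : forall A, Hom Cat A (H A) -> Hom Cat A tc_carrier;
  tc_unfold_hom : forall A (a : Hom Cat A (H A)),
      tc_str ∘ tc_unfold a = fmap H (tc_unfold a) ∘ a;
  tc_unfold_unique : forall A (a : Hom Cat A (H A)) (h : Hom Cat A tc_carrier),
      tc_str ∘ h = fmap H h ∘ a -> h = tc_unfold a
}.
Arguments tc_carrier {Cat H} t.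
Arguments tc_str {Cat H} t.

Record FreeAlgebras (Cat : Category) (K : Functor Cat) := {
  Mo : Obj Cat -> Obj Cat;
  phi : forall X, Hom Cat (K (Mo X)) (Mo X);
  eta : forall X, Hom Cat X (Mo X);
  fext : forall X A, Hom Cat (K A) A -> Hom Cat X A -> Hom Cat (Mo X) A;
  fext_eta : forall X A (a : Hom Cat (K A) A) (f : Hom Cat X A),
      fext a f ∘ eta X = f;
  fext_hom : forall X A (a : Hom Cat (K A) A) (f : Hom Cat X A),
      fext a f ∘ phi X = a ∘ fmap K (fext a f);
  fext_unique : forall X A (a : Hom Cat (K A) A) (f : Hom Cat X A)
      (h : Hom Cat (Mo X) A),
      h ∘ eta X = f -> h ∘ phi X = a ∘ fmap K h -> h = fext a f
}.
Arguments Mo {Cat K} f0 _.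
Arguments phi {Cat K} f0 X.
Arguments eta {Cat K} f0 X.
Arguments fext {Cat K} f0 {X A} _ _.

Definition Mmap (Cat : Category) (K : Functor Cat) (F : FreeAlgebras K)
  (X Y : Obj Cat) (f : Hom Cat X Y) : Hom Cat (Mo F X) (Mo F Y) :=
  fext F (phi F Y) (eta F Y ∘ f).

Definition sharp (Cat : Category) (K : Functor Cat) (F : FreeAlgebras K)
  (A : Obj Cat) (a : Hom Cat (K A) A) : Hom Cat (Mo F A) A :=
  fext F a (idm A).

Definition HxId_obj (Cat : Category) (P : Products Cat) (H : Functor Cat)
  (X : Obj Cat) : Obj Cat := prodo P (H X) X.

Definition HxId_map (Cat : Category) (P : Products Cat) (H : Functor Cat)
  (X Y : Obj Cat) (f : Hom Cat X Y) :
  Hom Cat (HxId_obj P H X) (HxId_obj P H Y) :=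
  pairing P (fmap H f ∘ pi1 P) (f ∘ pi2 P).

Definition is_GSOS_rule (Cat : Category) (P : Products Cat) (H K : Functor Cat)
  (F : FreeAlgebras K)
  (ell : forall X, Hom Cat (K (HxId_obj P H X)) (H (Mo F X))) : Prop :=
  forall X Y (f : Hom Cat X Y),
    ell Y ∘ fmap K (HxId_map P H f) = fmap H (Mmap F f) ∘ ell X.

Definition is_interpretation (Cat : Category) (P : Products Cat)
  (H K : Functor Cat) (T : TerminalCoalgebra H) (F : FreeAlgebras K)
  (ell : forall X, Hom Cat (K (HxId_obj P H X)) (H (Mo F X)))
  (b : Hom Cat (K (tc_carrier T)) (tc_carrier T)) : Prop :=
  tc_str T ∘ b =
    fmap H (sharp F b) ∘ ell (tc_carrier T)
      ∘ fmap K (pairing P (tc_str T) (idm (tc_carrier T))).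
Arguments is_interpretation {Cat P H K} T {F} ell b.

From Stdlib Require Import ssreflect.
Set Implicit Arguments. Unset Strict Implicit.

(* Write C for the terminal H-coalgebra c : C -> HC and b : KC -> C for the
   ell-interpretation.  Via ell, every K-algebra a : KA -> A lifts to a
   K-algebra on HA x A; with it, a morphism g0 : Z -> HMZ x MZ whose second
   component is eta_Z extends homomorphically to MZ and yields an
   H-coalgebra ext_coalg g0 on MZ.  The central facts are:
   - fext_coalg_hom: if w : Z -> C satisfies c . w = H(w^b) . pi1 . g0, then
     the extension w^b : MZ -> C is a coalgebra homomorphism from
     ext_coalg g0 (since <c, id> is a homomorphism from b to its lifting);
   - unfold_alg_hom: the unfolding of ext_coalg g0 into C is a K-algebra
     homomorphism into b (by coinduction, comparing it with the monad
     multiplication, which is a coalgebra homomorphism out of a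
     "flattened" coalgebra on MMZ).
   For a sandwiched equation e : X -> MY with Y = HMX we take
   g0 = <H(mu_Y . Me), eta_Y>; solutions of e correspond to homomorphisms
   MY -> C that are both algebra and coalgebra homomorphisms, and the
   terminal coalgebra provides exactly one of these. *)

Section FreeAlgebraFacts.
Variables (Cat : Category) (K : Functor Cat) (F : FreeAlgebras K).

Definition alg_hom (A B : Cat) (a : Hom Cat (K A) A) (a' : Hom Cat (K B) B)
  (f : Hom Cat A B) : Prop := f ∘ a = a' ∘ fmap K f.

Lemma alg_hom_id (A : Cat) (a : Hom Cat (K A) A) : alg_hom a a (idm A).
Proof. by rewrite /alg_hom fmap_id comp_id_l comp_id_r. Qed.

Lemma alg_hom_comp (A B D : Cat) (a : Hom Cat (K A) A) (a' : Hom Cat (K B) B)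
  (a'' : Hom Cat (K D) D) (f : Hom Cat A B) (g : Hom Cat B D) :
  alg_hom a a' f -> alg_hom a' a'' g -> alg_hom a a'' (g ∘ f).
Proof.
  rewrite /alg_hom => Hf Hg.
  by rewrite -comp_assoc Hf comp_assoc Hg fmap_comp comp_assoc.
Qed.

Lemma fext_alg_hom (X A : Cat) (a : Hom Cat (K A) A) (f : Hom Cat X A) :
  alg_hom (phi F X) a (fext F a f).
Proof. exact: fext_hom. Qed.

Lemma fext_restrict (X A : Cat) (a : Hom Cat (K A) A) (h : Hom Cat (Mo F X) A) :
  alg_hom (phi F X) a h -> fext F a (h ∘ eta F X) = h.
Proof. by move=> Hh; rewrite -(fext_unique eq_refl Hh). Qed.

Lemma alg_hom_ext (X A : Cat) (a : Hom Cat (K A) A) (h h' : Hom Cat (Mo F X) A) :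
  alg_hom (phi F X) a h -> alg_hom (phi F X) a h' ->
  h ∘ eta F X = h' ∘ eta F X -> h = h'.
Proof. by move=> Hh Hh' E; rewrite -(fext_restrict Hh) -(fext_restrict Hh') E. Qed.

Lemma Mmap_eta (X Y : Cat) (f : Hom Cat X Y) : Mmap F f ∘ eta F X = eta F Y ∘ f.
Proof. exact: fext_eta. Qed.

Lemma Mmap_alg_hom (X Y : Cat) (f : Hom Cat X Y) :
  alg_hom (phi F X) (phi F Y) (Mmap F f).
Proof. exact: fext_hom. Qed.

Lemma Mmap_comp (X Y Z : Cat) (g : Hom Cat Y Z) (f : Hom Cat X Y) :
  Mmap F (g ∘ f) = Mmap F g ∘ Mmap F f.
Proof.
  apply: (alg_hom_ext (Mmap_alg_hom _) (alg_hom_comp (Mmap_alg_hom f) (Mmap_alg_hom g))).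
  by rewrite -comp_assoc !Mmap_eta (comp_assoc (Mmap F g)) Mmap_eta comp_assoc.
Qed.

Lemma sharp_eta (A : Cat) (a : Hom Cat (K A) A) : sharp F a ∘ eta F A = idm A.
Proof. exact: fext_eta. Qed.

Lemma sharp_alg_hom (A : Cat) (a : Hom Cat (K A) A) : alg_hom (phi F A) a (sharp F a).
Proof. exact: fext_hom. Qed.

Lemma fext_sharp (X A : Cat) (a : Hom Cat (K A) A) (f : Hom Cat X A) :
  fext F a f = sharp F a ∘ Mmap F f.
Proof.
  apply: (alg_hom_ext (fext_alg_hom a f) (alg_hom_comp (Mmap_alg_hom f) (sharp_alg_hom a))).
  by rewrite fext_eta -comp_assoc Mmap_eta comp_assoc sharp_eta comp_id_l.
Qed.

Lemma sharp_nat (A B : Cat) (a : Hom Cat (K A) A) (a' : Hom Cat (K B) B)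
  (f : Hom Cat A B) :
  alg_hom a a' f -> f ∘ sharp F a = sharp F a' ∘ Mmap F f.
Proof.
  move=> Hf.
  apply: (alg_hom_ext (alg_hom_comp (sharp_alg_hom a) Hf)
                      (alg_hom_comp (Mmap_alg_hom f) (sharp_alg_hom a'))).
  by rewrite -!comp_assoc sharp_eta Mmap_eta comp_assoc sharp_eta comp_id_l comp_id_r.
Qed.

Definition mu (X : Cat) : Hom Cat (Mo F (Mo F X)) (Mo F X) := sharp F (phi F X).

Lemma alg_hom_of_mu (X A : Cat) (a : Hom Cat (K A) A) (u : Hom Cat (Mo F X) A) :
  u ∘ mu X = fext F a u -> alg_hom (phi F X) a u.
Proof.
  move=> Hu.
  have Hphi : phi F X = mu X ∘ phi F (Mo F X) ∘ fmap K (eta F (Mo F X)).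
    by rewrite /mu (sharp_alg_hom (phi F X)) -comp_assoc -fmap_comp sharp_eta
               fmap_id comp_id_r.
  by rewrite /alg_hom Hphi !comp_assoc Hu fext_hom -comp_assoc -fmap_comp fext_eta.
Qed.
End FreeAlgebraFacts.

Section CoalgebraFacts.
Variables (Cat : Category) (H : Functor Cat) (T : TerminalCoalgebra H).

Definition coalg_hom (A B : Cat) (a : Hom Cat A (H A)) (a' : Hom Cat B (H B))
  (f : Hom Cat A B) : Prop := a' ∘ f = fmap H f ∘ a.

Lemma coalg_hom_comp (A B D : Cat) (a : Hom Cat A (H A)) (a' : Hom Cat B (H B))
  (a'' : Hom Cat D (H D)) (f : Hom Cat A B) (g : Hom Cat B D) :
  coalg_hom a a' f -> coalg_hom a' a'' g -> coalg_hom a a'' (g ∘ f).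
Proof.
  rewrite /coalg_hom => Hf Hg.
  by rewrite comp_assoc Hg -comp_assoc Hf comp_assoc fmap_comp.
Qed.

Lemma unfold_coalg_hom (A : Cat) (a : Hom Cat A (H A)) :
  coalg_hom a (tc_str T) (tc_unfold T a).
Proof. exact: tc_unfold_hom. Qed.

Lemma coalg_hom_terminal_eq (A : Cat) (a : Hom Cat A (H A))
  (f g : Hom Cat A (tc_carrier T)) :
  coalg_hom a (tc_str T) f -> coalg_hom a (tc_str T) g -> f = g.
Proof. by move=> /tc_unfold_unique -> /tc_unfold_unique ->. Qed.
End CoalgebraFacts.

Section ProductFacts.
Variables (Cat : Category) (P : Products Cat).

Lemma pairing_comp (X Y A B : Cat) (f : Hom Cat X A) (g : Hom Cat X B)
  (h : Hom Cat Y X) :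
  pairing P f g ∘ h = pairing P (f ∘ h) (g ∘ h).
Proof. by apply: pairing_unique; rewrite comp_assoc ?pi1_pairing ?pi2_pairing. Qed.

Lemma pairing_proj (X A B : Cat) (h : Hom Cat X (prodo P A B)) :
  h = pairing P (pi1 P ∘ h) (pi2 P ∘ h).
Proof. exact: pairing_unique. Qed.

Variable H : Functor Cat.

Lemma HxId_map_pairing (X A B : Cat) (f : Hom Cat A B) (g : Hom Cat X (H A))
  (h : Hom Cat X A) :
  HxId_map P H f ∘ pairing P g h = pairing P (fmap H f ∘ g) (f ∘ h).
Proof. by rewrite pairing_comp -!comp_assoc pi1_pairing pi2_pairing. Qed.

Lemma pi1_HxId_map (A B : Cat) (f : Hom Cat A B) :
  pi1 P ∘ HxId_map P H f = fmap H f ∘ pi1 P.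
Proof. exact: pi1_pairing. Qed.
End ProductFacts.

Section GSOS.
Variables (Cat : Category) (P : Products Cat) (H K : Functor Cat)
  (F : FreeAlgebras K)
  (ell : forall X, Hom Cat (K (HxId_obj P H X)) (H (Mo F X))).
Hypothesis ell_nat : is_GSOS_rule ell.

Definition lift (A : Cat) (a : Hom Cat (K A) A) :
  Hom Cat (K (HxId_obj P H A)) (HxId_obj P H A) :=
  pairing P (fmap H (sharp F a) ∘ ell A) (a ∘ fmap K (pi2 P)).

Lemma lift_pi2 (A : Cat) (a : Hom Cat (K A) A) : alg_hom (lift a) a (pi2 P).
Proof. exact: pi2_pairing. Qed.

(* Lifting is functorial: naturality of ell turns an algebra homomorphism
   f into a homomorphism H f x f of the lifted algebras. *)
Lemma lift_alg_hom (A B : Cat) (a : Hom Cat (K A) A) (a' : Hom Cat (K B) B)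
  (f : Hom Cat A B) :
  alg_hom a a' f -> alg_hom (lift a) (lift a') (HxId_map P H f).
Proof.
  move=> Hf; rewrite /alg_hom /lift HxId_map_pairing pairing_comp; congr (pairing P _ _).
  - by rewrite -comp_assoc ell_nat comp_assoc -fmap_comp (sharp_nat F Hf) fmap_comp
               comp_assoc.
  - by rewrite -!comp_assoc -fmap_comp pi2_pairing fmap_comp !comp_assoc Hf.
Qed.

Definition ext_coalg (Z : Cat) (g0 : Hom Cat Z (HxId_obj P H (Mo F Z))) :
  Hom Cat (Mo F Z) (H (Mo F Z)) :=
  pi1 P ∘ fext F (lift (phi F Z)) g0.

Lemma ext_coalg_eta (Z : Cat) (g0 : Hom Cat Z (HxId_obj P H (Mo F Z))) :
  ext_coalg g0 ∘ eta F Z = pi1 P ∘ g0.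
Proof. by rewrite /ext_coalg -comp_assoc fext_eta. Qed.

Lemma fext_lift_pairing (Z : Cat) (g0 : Hom Cat Z (HxId_obj P H (Mo F Z))) :
  pi2 P ∘ g0 = eta F Z ->
  fext F (lift (phi F Z)) g0 = pairing P (ext_coalg g0) (idm (Mo F Z)).
Proof.
  move=> Hg0; rewrite {1}(pairing_proj (fext F (lift (phi F Z)) g0)); congr (pairing P _ _).
  apply: (alg_hom_ext (alg_hom_comp (fext_alg_hom _ _ _) (lift_pi2 (phi F Z))) (alg_hom_id _)).
  by rewrite -comp_assoc fext_eta Hg0 comp_id_l.
Qed.

Definition flatten (Z : Cat) (g0 : Hom Cat Z (HxId_obj P H (Mo F Z))) :
  Hom Cat (Mo F Z) (HxId_obj P H (Mo F (Mo F Z))) :=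
  pairing P (fmap H (eta F (Mo F Z)) ∘ ext_coalg g0) (eta F (Mo F Z)).

Lemma mu_coalg_hom (Z : Cat) (g0 : Hom Cat Z (HxId_obj P H (Mo F Z))) :
  pi2 P ∘ g0 = eta F Z ->
  coalg_hom (ext_coalg (flatten g0)) (ext_coalg g0) (mu F Z).
Proof.
  move=> Hg0.
  have Hmu : fext F (lift (phi F Z)) g0 ∘ mu F Z
             = HxId_map P H (mu F Z) ∘ fext F (lift (phi F (Mo F Z))) (flatten g0).
  { apply: (alg_hom_ext (alg_hom_comp (sharp_alg_hom F (phi F Z)) (fext_alg_hom _ _ _))
             (alg_hom_comp (fext_alg_hom _ _ _) (lift_alg_hom (sharp_alg_hom F (phi F Z))))).
    rewrite -!comp_assoc /mu sharp_eta comp_id_r fext_eta /flatten HxId_map_pairing.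
    by rewrite sharp_eta comp_assoc -fmap_comp sharp_eta fmap_id comp_id_l fext_lift_pairing. }
  by rewrite /coalg_hom /ext_coalg -comp_assoc Hmu (comp_assoc (pi1 P)) pi1_HxId_map
             comp_assoc.
Qed.

Section Interpretation.
Variables (T : TerminalCoalgebra H) (b : Hom Cat (K (tc_carrier T)) (tc_carrier T)).
Hypothesis hb : is_interpretation T ell b.

Lemma interpretation_alg_hom :
  alg_hom b (lift b) (pairing P (tc_str T) (idm (tc_carrier T))).
Proof.
  rewrite /alg_hom /lift !pairing_comp; congr (pairing P _ _).
  - by rewrite hb -!comp_assoc.
  - by rewrite -comp_assoc -fmap_comp pi2_pairing fmap_id comp_id_l comp_id_r.
Qed.

Lemma fext_coalg_hom (Z : Cat) (g0 : Hom Cat Z (HxId_obj P H (Mo F Z)))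
  (w : Hom Cat Z (tc_carrier T)) :
  pi2 P ∘ g0 = eta F Z ->
  tc_str T ∘ w = fmap H (fext F b w) ∘ pi1 P ∘ g0 ->
  coalg_hom (ext_coalg g0) (tc_str T) (fext F b w).
Proof.
  move=> Hg0 Hw.
  have E : pairing P (tc_str T) (idm _) ∘ fext F b w
           = HxId_map P H (fext F b w) ∘ fext F (lift (phi F Z)) g0.
  { apply: (alg_hom_ext (alg_hom_comp (fext_alg_hom _ _ _) interpretation_alg_hom)
             (alg_hom_comp (fext_alg_hom _ _ _) (lift_alg_hom (fext_alg_hom F b w)))).
    rewrite -!comp_assoc !fext_eta pairing_comp comp_id_l (pairing_proj g0).
    by rewrite HxId_map_pairing Hg0 fext_eta Hw comp_assoc. }
  move: E; rewrite (fext_lift_pairing Hg0) HxId_map_pairing comp_id_r pairing_comp comp_id_l.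
  by move=> /(f_equal (fun h => pi1 P ∘ h)); rewrite !pi1_pairing.
Qed.

(* The unfolding u of ext_coalg g0 into the terminal coalgebra is a
   K-algebra homomorphism into the interpretation: both u . mu and the
   extension of u are coalgebra homomorphisms out of the flattened
   coalgebra, hence equal. *)
Lemma unfold_alg_hom (Z : Cat) (g0 : Hom Cat Z (HxId_obj P H (Mo F Z))) :
  pi2 P ∘ g0 = eta F Z -> alg_hom (phi F Z) b (tc_unfold T (ext_coalg g0)).
Proof.
  move=> Hg0; apply: alg_hom_of_mu.
  apply: (coalg_hom_terminal_eq (a := ext_coalg (flatten g0))).
  - exact: (coalg_hom_comp (mu_coalg_hom Hg0) (unfold_coalg_hom T _)).
  - apply: fext_coalg_hom; first exact: pi2_pairing.
    rewrite /flatten -comp_assoc pi1_pairing comp_assoc -fmap_comp fext_eta.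
    exact: unfold_coalg_hom.
Qed.
End Interpretation.
End GSOS.

Section SandwichedEquations.
Variables (Cat : Category) (P : Products Cat) (H K : Functor Cat)
  (T : TerminalCoalgebra H) (F : FreeAlgebras K)
  (ell : forall X, Hom Cat (K (HxId_obj P H X)) (H (Mo F X))).
Hypothesis ell_nat : is_GSOS_rule ell.
Variable cinv : Hom Cat (H (tc_carrier T)) (tc_carrier T).
Hypothesis cinv_l : cinv ∘ tc_str T = idm (tc_carrier T).
Hypothesis cinv_r : tc_str T ∘ cinv = idm (H (tc_carrier T)).
Variable b : Hom Cat (K (tc_carrier T)) (tc_carrier T).
Hypothesis hb : is_interpretation T ell b.
Variables (X : Cat) (e : Hom Cat X (Mo F (H (Mo F X)))).

Local Notation Y := (H (Mo F X)).
Local Notation C := (tc_carrier T).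

Definition eq_rhs (s : Hom Cat X C) : Hom Cat X C :=
  sharp F b ∘ Mmap F cinv ∘ Mmap F (fmap H (sharp F b))
    ∘ Mmap F (fmap H (Mmap F s)) ∘ e.

Definition eq_subst : Hom Cat (Mo F X) (Mo F Y) := mu F Y ∘ Mmap F e.

Definition eq_coalg : Hom Cat (Mo F Y) (H (Mo F Y)) :=
  ext_coalg ell (pairing P (fmap H eq_subst) (eta F Y)).

Definition eq_solution : Hom Cat X C := tc_unfold T eq_coalg ∘ e.

Lemma eq_rhs_fext (s : Hom Cat X C) :
  eq_rhs s = fext F b (cinv ∘ fmap H (sharp F b ∘ Mmap F s)) ∘ e.
Proof. by rewrite /eq_rhs fext_sharp fmap_comp !Mmap_comp !comp_assoc. Qed.

Lemma sharp_Mmap_hom (v : Hom Cat (Mo F Y) C) :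
  alg_hom (phi F Y) b v -> sharp F b ∘ Mmap F (v ∘ e) = v ∘ eq_subst.
Proof.
  by move=> Hv; rewrite Mmap_comp comp_assoc -(sharp_nat F Hv) /eq_subst comp_assoc.
Qed.

Lemma eq_coalg_hom_iff (v : Hom Cat (Mo F Y) C) :
  alg_hom (phi F Y) b v ->
  coalg_hom eq_coalg (tc_str T) v <-> tc_str T ∘ (v ∘ eta F Y) = fmap H (v ∘ eq_subst).
Proof.
  move=> Hv; split.
  - by rewrite /coalg_hom comp_assoc => ->; rewrite -comp_assoc /eq_coalg ext_coalg_eta
         pi1_pairing fmap_comp.
  - move=> Hguard; rewrite -(fext_restrict Hv); apply: fext_coalg_hom => //;
      first exact: pi2_pairing.
    by rewrite fext_restrict // Hguard -comp_assoc pi1_pairing fmap_comp.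
Qed.

(* Existence: the unfolding is both an algebra and a coalgebra homomorphism. *)
Lemma eq_solution_solves : eq_solution = eq_rhs eq_solution.
Proof.
  set u := tc_unfold T eq_coalg.
  have Hu : alg_hom (phi F Y) b u by apply: (unfold_alg_hom ell_nat hb); exact: pi2_pairing.
  have Hguard := proj1 (eq_coalg_hom_iff Hu) (unfold_coalg_hom T _).
  rewrite eq_rhs_fext /eq_solution sharp_Mmap_hom // -Hguard comp_assoc cinv_l comp_id_l.
  by rewrite fext_restrict.
Qed.

(* Uniqueness: any solution s is v . e for an algebra homomorphism v which
   is guarded, hence a coalgebra homomorphism, hence the unfolding. *)
Lemma eq_solution_unique (s : Hom Cat X C) : s = eq_rhs s -> s = eq_solution.
Proof.
  rewrite eq_rhs_fext => Hs; set v := fext F b _ in Hs.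
  have Hv : alg_hom (phi F Y) b v by exact: fext_alg_hom.
  suff Heq : v = tc_unfold T eq_coalg by rewrite Hs Heq.
  apply: (coalg_hom_terminal_eq (proj2 (eq_coalg_hom_iff Hv) _) (unfold_coalg_hom T _)).
  by rewrite /v fext_eta comp_assoc cinv_r comp_id_l {1}Hs sharp_Mmap_hom.
Qed.
End SandwichedEquations.

Theorem mainTheorem1 (Cat : Category) (P : Products Cat) (Q : Coproducts Cat)
  (H K : Functor Cat) (T : TerminalCoalgebra H) (F : FreeAlgebras K)
  (ell : forall X, Hom Cat (K (HxId_obj P H X)) (H (Mo F X)))
  (ell_nat : is_GSOS_rule ell)
  (cinv : Hom Cat (H (tc_carrier T)) (tc_carrier T))
  (cinv_l : cinv ∘ tc_str T = idm (tc_carrier T))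
  (cinv_r : tc_str T ∘ cinv = idm (H (tc_carrier T)))
  (b : Hom Cat (K (tc_carrier T)) (tc_carrier T))
  (hb : is_interpretation T ell b)
  (hb_unique : forall b', is_interpretation T ell b' -> b' = b)
  (X : Obj Cat) (e : Hom Cat X (Mo F (H (Mo F X)))) :
  exists sol : Hom Cat X (tc_carrier T),
    (sol = sharp F b ∘ Mmap F cinv ∘ Mmap F (fmap H (sharp F b))
             ∘ Mmap F (fmap H (Mmap F sol)) ∘ e)
    /\ forall sol' : Hom Cat X (tc_carrier T),
         sol' = sharp F b ∘ Mmap F cinv ∘ Mmap F (fmap H (sharp F b))
                  ∘ Mmap F (fmap H (Mmap F sol')) ∘ e ->
         sol' = sol.
Proof.
  exists (eq_solution T ell e); split.
  - exact: (eq_solution_solves ell_nat cinv_l hb).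
  - move=> s; exact: (eq_solution_unique ell_nat cinv_r).
Qed.
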